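(* For every instance of DCIC there exists a threshold $\tau\ge 0$ such that, for every agent utility distribution and every best response of the agent, the SPMI with threshold $\tau$ yields principal's expected utility, excluding the delegation cost, of at least $\frac12\,\mathbb E\big[\max_{i\in[n]}(X_i-c_i)^+\big]$.
   Context: Delegated choice with inspection cost (DCIC). There are $n$ alternatives indexed by $[n]=\{1,\dots,n\}$. Each alternative $i$ has a principal's utility $X_i\ge 0$ and an agent's utility $Y_i\ge 0$; the pairs $(X_i,Y_i)$, $i\in[n]$, are mutually independent random vectors (with $X_i$ and $Y_i$ possibly dependent); the principal knows the distributions of the $X_i$. Alternative $i$ has a deterministic inspection cost $c_i\ge 0$. The SPMI (single-proposal mechanism with inspection) with threshold $\tau$ is the delegating mechanism with signal set $[n]\cup\{\perp\}$: the agent observes all $(X_i,Y_i)$ and sends a signal; on signal $j\in[n]$ the principal inspects $j$ (paying $c_j$) and selects $j$ iff $X_j-c_j\ge\tau$ (otherwise selects nothing); on signal $\perp$ nothing is inspected or selected. The agent's utility is $Y_k$ if $k$ is selected and $0$ if nothing is selected; he sends a signal maximizing it, breaking ties in favor of the principal (among signals giving him equal utility he sends one maximizing the principal's realized utility $\sum_i(\mathbf A_iX_i-\mathbf I_ic_i)$, where $\mathbf A_i,\mathbf I_i$ indicate selection/inspection of $i$). $(z)^+=\max(z,0)$. *)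

From HB Require Import structures.
From mathcomp Require Import all_boot all_order all_algebra.
From mathcomp Require Import all_classical all_reals all_analysis.
Set Implicit Arguments. Unset Strict Implicit. Unset Printing Implicit Defensive.
Import Order.TTheory GRing.Theory Num.Theory.
Local Open Scope classical_set_scope.
Local Open Scope ring_scope.

Definition pairs_independent (R : realType) (d : measure_display)
  (Omega : measurableType d) (P : probability Omega R) (n : nat)
  (X Y : 'I_n -> Omega -> R) : Prop :=
  forall (J : {set 'I_n}) (B : 'I_n -> set (R * R)%type),
    (forall i, measurable (B i)) ->
    P (\big[setI/setT]_(i in J) [set w | B i (X i w, Y i w)])
    = (\prod_(i in J) P [set w | B i (X i w, Y i w)])%E.

(* SPMI with threshold tau. A signal is [Some j] (propose j) or [None] (perp).
   Alternative j is selected iff signal j is sent and X_j - c_j >= tau. *)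
Definition spmi_selects (R : realType) (n : nat) (c : 'I_n -> R) (tau : R)
  (x : 'I_n -> R) (j : 'I_n) : bool := tau <= x j - c j.

Definition spmi_agent_util (R : realType) (n : nat) (c : 'I_n -> R) (tau : R)
  (x y : 'I_n -> R) (s : option 'I_n) : R :=
  match s with
  | Some j => if spmi_selects c tau x j then y j else 0
  | None => 0
  end.

(* principal's realized utility sum_i (A_i X_i - I_i c_i) for a signal *)
Definition spmi_principal_util (R : realType) (n : nat) (c : 'I_n -> R) (tau : R)
  (x : 'I_n -> R) (s : option 'I_n) : R :=
  match s with
  | Some j => (if spmi_selects c tau x j then x j else 0) - c j
  | None => 0
  end.

Definition spmi_best_response (R : realType) (d : measure_display)
  (Omega : measurableType d) (n : nat) (c : 'I_n -> R) (tau : R)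
  (X Y : 'I_n -> Omega -> R) (s : Omega -> option 'I_n) : Prop :=
  forall w (s' : option 'I_n),
    let x := fun i => X i w in let y := fun i => Y i w in
    spmi_agent_util c tau x y s' <= spmi_agent_util c tau x y (s w) /\
    (spmi_agent_util c tau x y s' = spmi_agent_util c tau x y (s w) ->
     spmi_principal_util c tau x s' <= spmi_principal_util c tau x (s w)).

From HB Require Import structures.
From mathcomp Require Import all_boot all_order all_algebra.
From mathcomp Require Import all_classical all_reals all_analysis.
From mathcomp Require Import measurable_realfun lra ring.
Set Implicit Arguments. Unset Strict Implicit. Unset Printing Implicit Defensive.
Import Order.TTheory GRing.Theory Num.Theory.
Import numFieldNormedType.Exports.
Local Open Scope classical_set_scope.
Local Open Scope ring_scope.

(* Choose tau >= 0 with tau = sum_i E[(X_i - c_i - tau)^+]; such a fixed point exists because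
   the right-hand side is nonincreasing and n-Lipschitz in tau.  Pointwise
   max_i (X_i - c_i)^+ <= tau + sum_i (X_i - c_i - tau)^+, so the benchmark is at most 2 tau.
   Against a best-responding agent, the principal gets at least tau as soon as some alternative
   passes the threshold, and (X_i - c_i - tau)^+ on top of it when i is the only alternative
   that can pass.  With q the probability that no alternative passes and B_i the event that no
   alternative other than i passes, independence turns this into
   tau (1 - q) + sum_i P(B_i) E[(X_i - c_i - tau)^+] >= tau (1 - q) + q tau = tau.
   If some E[(X_i - c_i)^+] is infinite, any tau giving every B_i positive probability makes
   the principal's expected utility infinite. *)

Definition below_threshold (R : realType) (n : nat) (c : 'I_n -> R) (tau : R)
  (J : {set 'I_n}) (x : 'I_n -> R) : bool :=
  [forall j in J, x j - c j < tau].

Section spmi_pointwise.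
Variables (R : realType) (n : nat) (c : 'I_n -> R) (tau : R).
Variables (x y : 'I_n -> R) (s : option 'I_n).
Hypothesis tau_ge0 : 0 <= tau.
Hypothesis y_ge0 : forall i, 0 <= y i.
Hypothesis best : forall s' : option 'I_n,
  spmi_agent_util c tau x y s' <= spmi_agent_util c tau x y s /\
  (spmi_agent_util c tau x y s' = spmi_agent_util c tau x y s ->
   spmi_principal_util c tau x s' <= spmi_principal_util c tau x s).

Local Notation U := (spmi_principal_util c tau x).

Let U_passing j : tau <= x j - c j -> U (Some j) = x j - c j.
Proof. by move=> pj; rewrite /= /spmi_selects pj. Qed.

Let agent_util_eq0 :
  ~ (exists2 k, s = Some k & tau <= x k - c k) -> spmi_agent_util c tau x y s = 0.
Proof.
case: s => [k|] //= nsel; rewrite /spmi_selects.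
by case: ifP => // pk; exfalso; apply: nsel; exists k.
Qed.

Lemma spmi_principal_util_ge0 : 0 <= U s.
Proof.
have [[k -> pk]|nsel] := pselect (exists2 k, s = Some k & tau <= x k - c k).
  by rewrite U_passing // (le_trans tau_ge0).
by have [_] := best None; apply; rewrite agent_util_eq0.
Qed.

(* An alternative that passes either is proposed, or gives the agent nothing and then the
   tie-breaking rule makes the principal prefer [s] to it. *)
Lemma spmi_principal_util_ge_passing j : tau <= x j - c j ->
  exists2 k, tau <= x k - c k & x k - c k <= U s.
Proof.
move=> pj.
have [[k -> pk]|nsel] := pselect (exists2 k, s = Some k & tau <= x k - c k).
  by exists k; rewrite ?U_passing.
exists j => //; rewrite -U_passing //.
have [agent_le principal_le] := best (Some j).
apply: principal_le; apply/eqP; rewrite eq_le agent_le agent_util_eq0 //=.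
by rewrite /spmi_selects pj y_ge0.
Qed.

Lemma spmi_principal_util_lower_bound :
  tau * (~~ below_threshold c tau [set: 'I_n] x)%:R +
  \sum_(i < n) Num.max (x i - c i - tau) 0 * (below_threshold c tau [set~ i] x)%:R
  <= U s.
Proof.
have [/forallP below_all | /forallPn [j]] := boolP (below_threshold c tau [set: 'I_n] x).
  rewrite mulr0 add0r big1 ?spmi_principal_util_ge0 // => i _.
  have := below_all i; rewrite inE /= => lti.
  by rewrite (max_idPr _) ?mul0r // subr_le0 ltW.
rewrite inE /= -leNgt mulr1 => pj.
have [k pk le_kU] := spmi_principal_util_ge_passing pj.
apply: le_trans le_kU; rewrite -lerBrDl.
rewrite (bigD1 k) //= big1 => [|i ik]; last first.
  suff -> : below_threshold c tau [set~ i] x = false by rewrite mulr0.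
  by apply/forallP => /(_ k); rewrite !inE eq_sym ik /= ltNge pk.
by rewrite addr0 max_l ?subr_ge0 // ler_piMr ?subr_ge0 // lern1 leq_b1.
Qed.

End spmi_pointwise.

Import HBNNSimple.

Lemma in_bigsetI (T : Type) (I : finType) (J : {set I}) (F : I -> set T) (w : T) :
  (\big[setI/setT]_(j in J) F j) w <-> (forall j, j \in J -> F j w).
Proof.
rewrite -bigcap_seq_cond; split=> [Fw j jJ | Fw j /andP[_ jJ]]; last exact: Fw.
by apply: Fw; rewrite /= mem_index_enum jJ.
Qed.

Lemma integral_mrestr_nnsfun d (T : measurableType d) (R : realType)
  (m : {measure set T -> \bar R}) (B : set T) (mB : measurable B)
  (h : {nnsfun T >-> R}) :
  (\int[mrestr m mB]_x (h x)%:E = \int[m]_(x in B) (h x)%:E)%E.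
Proof.
under [LHS]eq_integral do rewrite fimfunE -fsumEFin//.
rewrite [LHS]ge0_integral_fsum//; last 2 first.
  - by move=> r; exact/measurable_EFinP/measurableT_comp.
  - by move=> k x _; rewrite EFinM nnfun_muleindic_ge0.
under [RHS]eq_integral do rewrite fimfunE -fsumEFin//.
rewrite [RHS]ge0_integral_fsum//; last 2 first.
  - by move=> r; exact/measurable_EFinP/measurableT_comp.
  - by move=> k x _; rewrite EFinM nnfun_muleindic_ge0.
apply: eq_fsbigr => r _; rewrite !integralZl_indic_nnsfun// !integral_indic//=.
by rewrite /mrestr setIT.
Qed.

Lemma integral_mrestr d (T : measurableType d) (R : realType)
  (m : {measure set T -> \bar R}) (B : set T) (mB : measurable B)
  (f : T -> \bar R) : measurable_fun setT f -> (forall x, 0 <= f x)%E ->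
  (\int[mrestr m mB]_x f x = \int[m]_(x in B) f x)%E.
Proof.
move=> mf f0; pose f_ := nnsfun_approx measurableT mf.
have approx (mu : {measure set T -> \bar R}) D : measurable D ->
    (\int[mu]_(x in D) f x = limn (fun k => \int[mu]_(x in D) (f_ k x)%:E))%E.
  move=> mD; rewrite -monotone_convergence//=.
  - apply: eq_integral => x _; apply/esym/cvg_lim => //.
    exact: cvg_nnsfun_approx.
  - by move=> k; apply/measurable_EFinP/measurable_funTS.
  - by move=> k x _; rewrite lee_fin.
  - by move=> x _ a b ab; rewrite lee_fin; exact/lefP/nd_nnsfun_approx.
rewrite approx // approx //; congr (limn _); apply/funext => k.
exact: integral_mrestr_nnsfun.
Qed.

Lemma ge0_le_integral_nonmeasurable d (T : measurableType d) (R : realType)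
  (mu : {measure set T -> \bar R}) (f g : T -> \bar R) :
  (forall x, 0 <= f x)%E -> (forall x, f x <= g x)%E ->
  (\int[mu]_x f x <= \int[mu]_x g x)%E.
Proof.
move=> f0 fg; have g0 x : (0 <= g x)%E by exact: le_trans (f0 x) (fg x).
rewrite !ge0_integralTE//; apply: ereal_sup_le => _ [h hf <-].
by exists h => //= x; exact: le_trans (hf x) (fg x).
Qed.

Lemma bigmax_max0_le (R : realType) (n : nat) (z : 'I_n -> R) (tau : R) :
  0 <= tau ->
  \big[Num.max/0]_(i < n) Num.max (z i) 0 <= tau + \sum_(i < n) Num.max (z i - tau) 0.
Proof.
move=> tau_ge0; have sum_ge0 : 0 <= \sum_(i < n) Num.max (z i - tau) 0.
  by apply: sumr_ge0 => i _; rewrite le_max lexx orbT.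
apply: (big_ind (fun v => v <= _)) => [|u v ? ?|i _]; first exact: addr_ge0.
  by rewrite ge_max; apply/andP.
have le_i : Num.max (z i) 0 <= tau + Num.max (z i - tau) 0.
  by rewrite ge_max addr_ge0 ?le_max ?lexx ?orbT // -lerBlDl le_max lexx.
apply: le_trans le_i _; rewrite (bigD1 i) //= addrA lerDl.
by apply: sumr_ge0 => j _; rewrite le_max lexx orbT.
Qed.

Lemma measurable_max0_sub (R : realType) (a t : R) :
  measurable_fun setT (fun x : R => Num.max (x - a - t) 0).
Proof. by apply: measurable_maxr => //; do 2 apply: measurable_funB => //. Qed.

Lemma measurable_sub_lt (R : realType) (a t : R) : measurable [set x : R | x - a < t].
Proof.
have -> : [set x : R | x - a < t] = `]-oo, t + a[%classic.
  by apply/seteqP; split => x /=; rewrite in_itv /= ltrBlDr.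
exact: measurable_itv.
Qed.

Section independence.
Variables (R : realType) (d : measure_display) (Omega : measurableType d).
Variables (P : probability Omega R) (n : nat) (X Y : 'I_n -> Omega -> R).
Hypothesis mX : forall i, measurable_fun setT (X i).
Hypothesis indep : pairs_independent P X Y.

Lemma measurable_bigsetI_preimage (J : {set 'I_n}) (E : 'I_n -> set R) :
  (forall j, measurable (E j)) ->
  measurable (\big[setI/setT]_(j in J) X j @^-1` E j).
Proof.
by move=> mE; apply: bigsetI_measurable => j _; rewrite -[X j @^-1` _]setTI; exact: mX.
Qed.

Lemma pairs_independent_preimage (J : {set 'I_n}) (E : 'I_n -> set R) :
  (forall j, measurable (E j)) ->
  P (\big[setI/setT]_(j in J) X j @^-1` E j) = (\prod_(j in J) P (X j @^-1` E j))%E.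
Proof.
move=> mE; have preimE j : [set w | (E j `*` setT) (X j w, Y j w)] = X j @^-1` E j.
  by apply/seteqP; split=> w /=; [case | split].
have := indep J (fun j => measurableX (mE j) measurableT).
by rewrite (eq_bigr _ (fun j _ => preimE j)) (eq_bigr _ (fun j _ => congr1 P (preimE j))).
Qed.

Lemma pairs_independent_setI (i : 'I_n) (A : set R) (E : 'I_n -> set R) :
  measurable A -> (forall j, measurable (E j)) ->
  P (X i @^-1` A `&` \big[setI/setT]_(j in [set~ i]%SET) X j @^-1` E j) =
  (P (X i @^-1` A) * P (\big[setI/setT]_(j in [set~ i]%SET) X j @^-1` E j))%E.
Proof.
move=> mA mE; pose E' j := if j == i then A else E j.
have mE' j : measurable (E' j) by rewrite /E'; case: ifP.
have others j : j \in [set~ i]%SET -> X j @^-1` E' j = X j @^-1` E j.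
  by rewrite in_setC1 /E' => /negbTE ->.
have split_i (F : 'I_n -> \bar R) :
    (\prod_(j in [set: 'I_n]%SET) F j = F i * \prod_(j in [set~ i]%SET) F j)%E.
  by rewrite (bigD1 i) ?inE //=; congr (_ * _)%E; apply: eq_bigl => j; rewrite !inE.
have split_iI (F : 'I_n -> set Omega) :
    \big[setI/setT]_(j in [set: 'I_n]%SET) F j = F i `&` \big[setI/setT]_(j in [set~ i]%SET) F j.
  by rewrite (bigD1 i) ?inE //=; congr (_ `&` _); apply: eq_bigl => j; rewrite !inE.
have := pairs_independent_preimage [set: 'I_n]%SET mE'.
rewrite split_i split_iI /E' eqxx (eq_bigr _ others).
by rewrite (eq_bigr _ (fun j jni => congr1 P (others j jni))) pairs_independent_preimage.
Qed.

Variables (mu : 'I_n -> probability R R).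
Hypothesis law : forall i A, measurable A -> P (X i @^-1` A) = mu i A.

(* Restricted to [B] and pushed forward by [X i], [P] becomes [P B] times the law of [X i]. *)
Lemma integral_independent (i : 'I_n) (E : 'I_n -> set R) (g : R -> R) :
  (forall j, measurable (E j)) -> measurable_fun setT g -> (forall x, 0 <= g x) ->
  (\int[P]_(w in \big[setI/setT]_(j in [set~ i]%SET) X j @^-1` E j) (g (X i w))%:E =
   P (\big[setI/setT]_(j in [set~ i]%SET) X j @^-1` E j) * \int[mu i]_x (g x)%:E)%E.
Proof.
move=> mE mg g0; set B := \big[setI/setT]_(j in _) _.
have mB : measurable B by exact: measurable_bigsetI_preimage.
have mgX : measurable_fun setT (fun w => (g (X i w))%:E).
  by apply/measurable_EFinP; exact: measurableT_comp.
rewrite -(integral_mrestr P mB mgX) => [|w]; last by rewrite lee_fin.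
have := ge0_integral_pushforward (mX i) (mrestr P mB) (f := EFin \o g) measurableT.
rewrite preimage_setT => <- //; last 2 first.
  - exact/measurable_EFinP.
  - by move=> y _; rewrite /= lee_fin.
have PB_ge0 : (0 <= fine (P B))%R by apply: fine_ge0.
have PB_fin : P B \is a fin_num by apply: fin_num_measure.
rewrite (eq_measure_integral (mscale (NngNum PB_ge0) (mu i))) => [|A mA _]; last first.
  change (P (X i @^-1` A `&` B) = (fine (P B))%:E * mu i A)%E.
  by rewrite fineK // pairs_independent_setI // law // muleC.
rewrite ge0_integral_mscale //= ?fineK //; first exact/measurable_EFinP.
by move=> x _; rewrite lee_fin.
Qed.

End independence.

Definition expected_excess (R : realType) (mu : probability R R) (a t : R) : \bar R :=
  (\int[mu]_x (Num.max (x - a - t) 0)%:E)%E.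

Section expected_excess.
Variables (R : realType) (mu : probability R R) (a : R).
Local Notation m := (expected_excess mu a).

Let measurable_excess (t : R) : measurable_fun setT (fun x : R => (Num.max (x - a - t) 0)%:E).
Proof. by apply/measurable_EFinP; exact: measurable_max0_sub. Qed.

Let excess_ge0 (t x : R) : [set: R] x -> (0 <= (Num.max (x - a - t) 0)%:E)%E.
Proof. by rewrite lee_fin le_max lexx orbT. Qed.

Lemma expected_excess_ge0 t : (0 <= m t)%E.
Proof. by apply: integral_ge0 => x; apply: excess_ge0. Qed.

Lemma expected_excess_le t t' : t <= t' -> (m t' <= m t)%E.
Proof.
move=> le_tt'; apply: ge0_le_integral => // x _; first exact: excess_ge0.
by rewrite lee_fin le_max2 ?lerB.
Qed.

Lemma expected_excess_le_add t t' : t <= t' -> (m t <= m t' + (t' - t)%:E)%E.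
Proof.
move=> le_tt'; have dt_ge0 : 0 <= t' - t by rewrite subr_ge0.
rewrite /expected_excess -[(t' - t)%:E]mule1 -(probability_setT mu) -integral_cst //.
rewrite -ge0_integralD //; last exact: excess_ge0.
apply: ge0_le_integral => //; [exact: excess_ge0 | exact: emeasurable_funD |].
move=> x _; rewrite -EFinD lee_fin ge_max addr_ge0 ?le_max ?lexx ?orbT // andbT.
by rewrite -lerBlDr opprB addrA subrK le_max lexx.
Qed.

Lemma expected_excess_fin_num t : m 0 \is a fin_num -> m t \is a fin_num.
Proof.
move=> m0_fin; have le_m0 : (m t <= m 0 + (Num.max t 0 - t)%:E)%E.
  apply: le_trans (expected_excess_le_add (t' := Num.max t 0) _) _; first by rewrite le_max lexx.
  by rewrite leeD2r // expected_excess_le // le_max lexx orbT.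
rewrite ge0_fin_numE ?expected_excess_ge0 //; apply: le_lt_trans le_m0 _.
by rewrite ltey_eq fin_numD m0_fin.
Qed.

End expected_excess.

Lemma lipschitz_continuous (R : realType) (f : R -> R) (k : R) :
  (forall x y, `|f x - f y| <= k * `|x - y|) -> continuous f.
Proof.
move=> f_lip x; apply/cvgrPdist_lt => e e_gt0.
have ek_gt0 : 0 < e / (`|k| + 1) by rewrite divr_gt0 // ltr_wpDl.
near=> y; apply: le_lt_trans (f_lip x y) _.
apply: le_lt_trans (_ : _ <= (`|k| + 1) * `|x - y|) _.
  by rewrite ler_wpM2r // (le_trans (ler_norm k)) // lerDl.
rewrite mulrC -ltr_pdivlMr; last by rewrite ltr_wpDl.
near: y; exact: cvgr_dist_lt ek_gt0.
Unshelve. all: by end_near.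
Qed.

Lemma exists_fixed_point_nonincreasing (R : realType) (F : R -> R) (k : R) :
  0 <= F 0 -> (forall t t', t <= t' -> F t' <= F t <= F t' + k * (t' - t)) ->
  exists2 tau, 0 <= tau & F tau = tau.
Proof.
move=> F0_ge0 F_lip.
have F_dist x y : `|F x - F y| <= k * `|x - y|.
  wlog le_xy : x y / x <= y.
    by move=> W; case: (leP x y) => [|/ltW] /W //; rewrite distrC [`|x - y|]distrC.
  have /andP[le_Fyx le_Fxy] := F_lip x y le_xy.
  by rewrite ger0_norm ?subr_ge0 // (distrC x) ger0_norm ?subr_ge0 // lerBlDl.
have H_cont : continuous (fun t => t - F t).
  apply: (@lipschitz_continuous _ _ (1 + k)) => x y.
  have -> : x - F x - (y - F y) = (x - y) + (F y - F x) by ring.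
  by rewrite mulrDl mul1r (le_trans (ler_normD _ _)) // lerD // distrC.
have [|tau] := @IVT _ (fun t => t - F t) 0 (F 0) 0 F0_ge0 (continuous_subspaceT H_cont).
  have /andP[FF0_le _] := F_lip 0 (F 0) F0_ge0.
  by rewrite sub0r ge_min le_max lerNl oppr0 F0_ge0 subr_ge0 FF0_le orbT.
rewrite in_itv /= => /andP[tau_ge0 _] /eqP; rewrite subr_eq0 => /eqP tau_fixed.
by exists tau.
Qed.

Lemma exists_probability_sub_lt_gt0 (R : realType) (mu : probability R R) (a : R) :
  exists m : nat, (0 < mu [set x : R | (x - a < m%:R)%R])%E.
Proof.
have [//|none] := pselect (exists m : nat, (0 < mu [set x : R | (x - a < m%:R)%R])%E).
have mu0 m : mu [set x : R | (x - a < m%:R)%R] = 0%E.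
  apply/eqP; rewrite eq_le measure_ge0 andbT leNgt.
  by apply/negP => pos; apply: none; exists m.
have cover : [set: R] `<=` \bigcup_m [set x : R | (x - a < m%:R)%R].
  by move=> x _; exists (Num.truncn (x - a)).+1 => //; exact: truncnS_gt.
have := measure_sigma_subadditive mu (fun m => measurable_sub_lt a m%:R) measurableT cover.
rewrite eseries0 => [|i _ _]; last exact: mu0.
by rewrite leNgt [X in (0 < X)%E]probability_setT lte01.
Qed.

Lemma sum_expected_excess_fixed_point (R : realType) (n : nat) (c : 'I_n -> R)
  (mu : 'I_n -> probability R R) :
  (forall i, expected_excess (mu i) (c i) 0 \is a fin_num) ->
  exists2 tau, 0 <= tau & (\sum_(i < n) expected_excess (mu i) (c i) tau = tau%:E)%E.
Proof.
move=> fin0; have fin t i := expected_excess_fin_num t (fin0 i).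
pose F t := \sum_(i < n) fine (expected_excess (mu i) (c i) t).
have [tau tau_ge0 F_tau] : exists2 tau, 0 <= tau & F tau = tau.
  apply: (@exists_fixed_point_nonincreasing _ F n%:R).
    by apply: sumr_ge0 => i _; apply: fine_ge0; exact: expected_excess_ge0.
  move=> t t' le_tt'; apply/andP; split.
    by apply: ler_sum => i _; apply: fine_le; rewrite ?fin ?expected_excess_le.
  rewrite mulr_natl -[n in _ *+ n]card_ord -sumr_const /F -big_split /=.
  apply: ler_sum => i _.
  rewrite -[t' - t]/(fine (t' - t)%:E) -fineD ?fin //.
  by apply: fine_le; [exact: fin | rewrite fin_numD fin | exact: expected_excess_le_add].
exists tau => //; rewrite -[in RHS]F_tau /F -sumEFin.
by apply: eq_bigr => i _; rewrite fineK ?fin.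
Qed.

Lemma exists_spmi_threshold (R : realType) (n : nat) (c : 'I_n -> R)
  (mu : 'I_n -> probability R R) :
  exists2 tau : R, 0 <= tau &
    (\sum_(i < n) expected_excess (mu i) (c i) tau = tau%:E)%E \/
    (exists k, expected_excess (mu k) (c k) tau = +oo%E) /\
    (forall j, (0 < mu j [set x : R | (x - c j < tau)%R])%E).
Proof.
have [fin0|] := pselect (forall i, expected_excess (mu i) (c i) 0 \is a fin_num).
  by have [tau tau_ge0 fixed] := sum_expected_excess_fixed_point fin0; exists tau; [|left].
move=> /existsNP[k]; rewrite ge0_fin_numE ?expected_excess_ge0 // ltey => /negP/negPn/eqP excess_k.
have /choice[m pos_m] := fun j => exists_probability_sub_lt_gt0 (mu j) (c j).
pose tau : R := \sum_(j < n) (m j)%:R.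
have tau_ge0 : 0 <= tau by exact: sumr_ge0.
exists tau => //; right; split.
  exists k; have := expected_excess_le_add (mu k) (c k) tau_ge0.
  rewrite excess_k subr0 leye_eq => /eqP.
  by case: (expected_excess (mu k) (c k) tau).
move=> j; apply: lt_le_trans (pos_m j) _.
apply: le_measure; rewrite ?inE; try exact: measurable_sub_lt.
move=> x /= /lt_le_trans; apply.
by rewrite /tau (bigD1 j) //= lerDl sumr_ge0.
Qed.

Section spmi_bounds.
Variables (R : realType) (d : measure_display) (Omega : measurableType d).
Variables (P : probability Omega R) (n : nat) (X Y : 'I_n -> Omega -> R).
Variables (mu : 'I_n -> probability R R) (c : 'I_n -> R) (tau : R).
Hypothesis mX : forall i, measurable_fun setT (X i).
Hypothesis indep : pairs_independent P X Y.
Hypothesis law : forall i A, measurable A -> P (X i @^-1` A) = mu i A.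
Hypothesis tau_ge0 : 0 <= tau.

Definition below_event (J : {set 'I_n}) : set Omega :=
  \big[setI/setT]_(j in J) X j @^-1` [set t | t - c j < tau].

Lemma measurable_below_event J : measurable (below_event J).
Proof. by apply: measurable_bigsetI_preimage => // j; exact: measurable_sub_lt. Qed.

Lemma mem_below_event J w :
  (w \in below_event J) = below_threshold c tau J (fun i => X i w).
Proof.
apply/idP/forall_inP => [|below_w]; first by rewrite in_setE => /in_bigsetI.
by rewrite in_setE; apply/in_bigsetI.
Qed.

Let excess_ge0 (i : 'I_n) w : (0 <= (Num.max (X i w - c i - tau) 0)%:E)%E.
Proof. by rewrite lee_fin le_max lexx orbT. Qed.

Let measurable_excess (i : 'I_n) :
  measurable_fun setT (fun w => (Num.max (X i w - c i - tau) 0)%:E).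
Proof. by apply/measurable_EFinP; exact: measurableT_comp (measurable_max0_sub _ _) (mX i). Qed.

Lemma integral_excess_below (i : 'I_n) :
  (\int[P]_(w in below_event [set~ i]%SET) (Num.max (X i w - c i - tau) 0)%:E
   = P (below_event [set~ i]%SET) * expected_excess (mu i) (c i) tau)%E.
Proof.
apply: (integral_independent mX indep law) => [j||x]; first exact: measurable_sub_lt.
  exact: measurable_max0_sub.
by rewrite le_max lexx orbT.
Qed.

Lemma integral_excess (i : 'I_n) :
  (\int[P]_w (Num.max (X i w - c i - tau) 0)%:E = expected_excess (mu i) (c i) tau)%E.
Proof.
have := integral_independent mX indep law (E := fun=> setT)
  (g := fun x => Num.max (x - c i - tau) 0) i (fun=> measurableT) (measurable_max0_sub _ _).
rewrite big1 => [|j _]; last exact: preimage_setT.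
rewrite probability_setT mul1e; apply=> x.
by rewrite le_max lexx orbT.
Qed.

Lemma integral_max_excess_le :
  (\int[P]_w (\big[Num.max/0]_(i < n) Num.max (X i w - c i) 0)%:E
   <= tau%:E + \sum_(i < n) expected_excess (mu i) (c i) tau)%E.
Proof.
pose g w := (tau + \sum_(i < n) Num.max (X i w - c i - tau) 0)%:E.
apply: le_trans (ge0_le_integral_nonmeasurable (g := g) _ _ _) _ => [w|w|].
- rewrite lee_fin; apply: (big_ind (fun v => 0 <= v)) => // [u v u0 _|i _].
    by rewrite le_max u0.
  by rewrite le_max lexx orbT.
- by rewrite lee_fin bigmax_max0_le.
rewrite /g; under eq_integral do rewrite EFinD -sumEFin.
rewrite ge0_integralD //; last 2 first.
- by move=> w _; apply: sume_ge0 => i _.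
- exact: emeasurable_sum.
rewrite integral_cst // [X in (_ * X)%E]probability_setT mule1 ge0_integral_sum //.
by under eq_bigr do rewrite integral_excess.
Qed.

Definition spmi_lower_bound (w : Omega) : R :=
  tau * \1_(~` below_event [set: 'I_n]%SET) w +
  \sum_(i < n) Num.max (X i w - c i - tau) 0 * \1_(below_event [set~ i]%SET) w.

Lemma spmi_lower_bound_ge0 w : 0 <= spmi_lower_bound w.
Proof.
rewrite addr_ge0 ?mulr_ge0 // ?sumr_ge0 // => i _.
by rewrite mulr_ge0 // le_max lexx orbT.
Qed.

Lemma integral_spmi_lower_bound :
  (\int[P]_w (spmi_lower_bound w)%:E = tau%:E * (1 - P (below_event [set: 'I_n]%SET)) +
    \sum_(i < n) P (below_event [set~ i]%SET) * expected_excess (mu i) (c i) tau)%E.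
Proof.
have mBall : measurable (~` below_event [set: 'I_n]%SET).
  exact/measurableC/measurable_below_event.
have indic_ge0 (A : set Omega) w : 0 <= \1_A w :> R by rewrite indicE.
have mterm i : measurable_fun setT
    (fun w => (Num.max (X i w - c i - tau) 0 * \1_(below_event [set~ i]%SET) w)%:E).
  apply/measurable_EFinP/measurable_funM; last exact/measurable_indic/measurable_below_event.
  exact: measurableT_comp (measurable_max0_sub _ _) (mX i).
rewrite /spmi_lower_bound; under eq_integral do rewrite EFinD -sumEFin.
rewrite ge0_integralD //; last 4 first.
- by move=> w _; rewrite lee_fin mulr_ge0.
- exact/measurable_EFinP/measurable_funM/measurable_indic/mBall.
- by move=> w _; apply: sume_ge0 => i _; rewrite lee_fin mulr_ge0 // le_max lexx orbT.
- exact: emeasurable_sum.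
congr (_ + _)%E.
  under eq_integral do rewrite EFinM.
  rewrite ge0_integralZl_EFin //; last exact/measurable_EFinP/measurable_indic/mBall.
  rewrite (integral_indic P measurableT mBall) setIT [X in (_ * X)%E]probability_setC //.
  exact: measurable_below_event.
rewrite ge0_integral_sum //; last by move=> i w _; rewrite lee_fin mulr_ge0 // le_max lexx orbT.
apply: eq_bigr => i _; rewrite -integral_excess_below [RHS]integral_mkcond.
by apply: eq_integral => w _; rewrite patchE indicE; case: ifP; rewrite ?mulr1 ?mulr0.
Qed.

Section agent_best_response.
Variable s : Omega -> option 'I_n.
Hypothesis Y_ge0 : forall i w, 0 <= Y i w.
Hypothesis best : spmi_best_response c tau X Y s.

Local Notation principal_value :=
  (\int[P]_w (spmi_principal_util c tau (fun i => X i w) (s w))%:E)%E.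

(* [s] need not be measurable, so [principal_value] is only bounded from below by
   integrals of measurable minorants. *)
Lemma principal_value_ge :
  (tau%:E * (1 - P (below_event [set: 'I_n]%SET)) +
   \sum_(i < n) P (below_event [set~ i]%SET) * expected_excess (mu i) (c i) tau
   <= principal_value)%E.
Proof.
rewrite -integral_spmi_lower_bound.
apply: ge0_le_integral_nonmeasurable => w; first by rewrite lee_fin spmi_lower_bound_ge0.
rewrite /spmi_lower_bound lee_fin indicE in_setC mem_below_event.
under eq_bigr do rewrite indicE mem_below_event.
exact: spmi_principal_util_lower_bound tau_ge0 (fun i => Y_ge0 i w) (best w).
Qed.

Lemma spmi_half_optimal_of_fixed_point :
  (\sum_(i < n) expected_excess (mu i) (c i) tau = tau%:E)%E ->
  ((2%:R)^-1%:E * \int[P]_w (\big[Num.max/0]_(i < n) Num.max (X i w - c i) 0)%:E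
   <= principal_value)%E.
Proof.
move=> fixed; apply: le_trans (_ : _ <= tau%:E)%E _.
  apply: le_trans (lee_wpmul2l _ integral_max_excess_le) _; first by rewrite lee_fin invr_ge0.
  by rewrite fixed -EFinD -EFinM lee_fin; lra.
apply: le_trans principal_value_ge.
set q := P (below_event [set: 'I_n]%SET).
have q_fin : q \is a fin_num by exact: fin_num_measure (measurable_below_event _).
have q_le i : (q <= P (below_event [set~ i]%SET))%E.
  apply: le_measure; rewrite ?inE; try exact: measurable_below_event.
  by move=> w /in_bigsetI below_all; apply/in_bigsetI => j _; apply: below_all; rewrite inE.
have : (q * tau%:E <=
    \sum_(i < n) P (below_event [set~ i]%SET) * expected_excess (mu i) (c i) tau)%E.
  rewrite -fixed ge0_sume_distrr => [|i _]; last exact: expected_excess_ge0.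
  by apply: lee_sum => i _; apply: lee_wpmul2r; [exact: expected_excess_ge0 | exact: q_le].
move/(leeD2l (tau%:E * (1 - q))%E); apply: le_trans.
by rewrite -(fineK q_fin) -EFinB -!EFinM -EFinD lee_fin; lra.
Qed.

Lemma spmi_principal_value_pinfty (k : 'I_n) :
  expected_excess (mu k) (c k) tau = +oo%E ->
  (forall j, (0 < mu j [set x : R | (x - c j < tau)%R])%E) ->
  principal_value = +oo%E.
Proof.
move=> excess_k pos.
have Bk_gt0 : (0 < P (below_event [set~ k]%SET))%E.
  rewrite /below_event (pairs_independent_preimage indep) => [|j]; last exact: measurable_sub_lt.
  apply: (big_ind (fun v => 0 < v)%E) => [|u v|j _]; [exact: lte01 | exact: mule_gt0 |].
  by rewrite law //; exact: measurable_sub_lt.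
have sum_pinfty : (\sum_(i < n) P (below_event [set~ i]%SET) * expected_excess (mu i) (c i) tau
    = +oo)%E.
  rewrite (bigD1 k) //= excess_k muleC gt0_mulye // addye // gt_eqF // (lt_le_trans ltNy0) //.
  by apply: sume_ge0 => i _; apply: mule_ge0; [exact: measure_ge0 | exact: expected_excess_ge0].
apply/eqP; rewrite -leye_eq; apply: le_trans principal_value_ge.
have q_fin : P (below_event [set: 'I_n]%SET) \is a fin_num.
  exact: fin_num_measure (measurable_below_event _).
by rewrite sum_pinfty -(fineK q_fin) -EFinB -EFinM addey.
Qed.

End agent_best_response.

End spmi_bounds.

Theorem mainTheorem8 (R : realType) (n : nat) (c : 'I_n -> R)
  (mu : 'I_n -> probability R R) :
  (forall i, 0 <= c i) ->
  (forall i, mu i [set x : R | 0 <= x] = 1%E) ->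
  exists tau : R, 0 <= tau /\
  forall (d : measure_display) (Omega : measurableType d)
         (P : probability Omega R) (X Y : 'I_n -> Omega -> R),
    (forall i, measurable_fun setT (X i)) ->
    (forall i, measurable_fun setT (Y i)) ->
    (forall i w, 0 <= X i w) ->
    (forall i w, 0 <= Y i w) ->
    (forall i (A : set R), measurable A -> P (X i @^-1` A) = mu i A) ->
    pairs_independent P X Y ->
    forall s : Omega -> option 'I_n,
      spmi_best_response c tau X Y s ->
      ((2%:R)^-1%:E *
         \int[P]_w (\big[Num.max/0]_(i < n) Num.max (X i w - c i) 0)%:E
       <= \int[P]_w (spmi_principal_util c tau (fun i => X i w) (s w))%:E)%E.
Proof.
move=> _ _; have [tau tau_ge0 tau_spec] := exists_spmi_threshold c mu.
exists tau; split=> // d Omega P X Y mX _ _ Y_ge0 law indep s best.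
case: tau_spec => [fixed | [[k excess_k] pos]].
  exact: (spmi_half_optimal_of_fixed_point mX indep law tau_ge0 Y_ge0 best fixed).
by rewrite (spmi_principal_value_pinfty mX indep law tau_ge0 Y_ge0 best excess_k pos) leey.
Qed.
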